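(* Let $K$ be a commutative Noetherian ring with $1$, let $A$ be a $K$-algebra, and let $B$ be a $K$-subalgebra of $A$ such that $A/B$ is a finitely generated $K$-module. Then $B$ contains an ideal $I$ of $A$ such that $B/I$ is a finitely generated $K$-module (and hence $A/I$ is a finitely generated $K$-module as well).
   Context: A $K$-algebra is a structure that is simultaneously an associative ring (not necessarily with identity) and a $K$-module, with $K$-bilinear multiplication. *)

From mathcomp Require Import all_boot all_algebra.
Set Implicit Arguments.
Unset Strict Implicit.
Unset Printing Implicit Defensive.
Import GRing.Theory.
Local Open Scope ring_scope.

Definition is_ideal_comm (K : comPzRingType) (I : K -> Prop) : Prop :=
  [/\ I 0, (forall x y, I x -> I y -> I (x + y)) & (forall k x, I x -> I (k * x))].

Definition noetherian_ring (K : comPzRingType) : Prop :=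
  forall I : K -> Prop, is_ideal_comm I ->
    exists s : seq K, forall x, I x <-> exists c : seq K, x = \sum_(i < size s) c`_i * s`_i.

Definition in_Kspan (K : pzRingType) (M : lmodType K) (s : seq M) (x : M) : Prop :=
  exists c : seq K, x = \sum_(i < size s) c`_i *: s`_i.

(* (M, mul) is a K-algebra: an associative (not necessarily unital) ring
   structure on the K-module M with K-bilinear multiplication. *)
Definition is_Kalgebra (K : comPzRingType) (M : lmodType K) (mul : M -> M -> M) : Prop :=
  [/\ associative mul,
      (forall a x y, mul a (x + y) = mul a x + mul a y),
      (forall a x y, mul (x + y) a = mul x a + mul y a),
      (forall k x y, mul (k *: x) y = k *: mul x y) &
      (forall k x y, mul x (k *: y) = k *: mul x y)].

Definition is_Ksubmodule (K : pzRingType) (M : lmodType K) (S : M -> Prop) : Prop :=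
  [/\ S 0, (forall x y, S x -> S y -> S (x + y)) & (forall k x, S x -> S (k *: x))].

Definition is_Ksubalgebra (K : comPzRingType) (M : lmodType K) (mul : M -> M -> M)
  (B : M -> Prop) : Prop :=
  is_Ksubmodule B /\ (forall x y, B x -> B y -> B (mul x y)).

Definition is_Kideal (K : comPzRingType) (M : lmodType K) (mul : M -> M -> M)
  (I : M -> Prop) : Prop :=
  [/\ is_Ksubmodule I, (forall a x, I x -> I (mul a x)) & (forall a x, I x -> I (mul x a))].

(* For K-submodules N <= S of M: the quotient K-module S/N is finitely
   generated, i.e. there is a finite family s in S with S = N + span s. *)
Definition fg_quotient (K : pzRingType) (M : lmodType K) (S N : M -> Prop) : Prop :=
  exists s : seq M, (forall i, (i < size s)%N -> S s`_i) /\
    forall x, S x -> exists n y, N n /\ in_Kspan s y /\ x = n + y.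

(* Write A = B + span(t_1, ..., t_m).  The largest two-sided ideal of A inside B is the set
   of x in B with ax, xb, axb in B for all a, b in A; by bilinearity it suffices to take a, b
   among the t_i, so it is cut out of B by finitely many conditions f x in B with f linear.
   For each such f, x |-> f x mod B embeds B / {x in B | f x in B} into A / B, a finitely
   generated module over a Noetherian ring, so B modulo each condition, and hence modulo
   their intersection, is finitely generated. *)
From HB Require Import structures.
From mathcomp Require Import all_boot all_algebra.
Set Implicit Arguments.
Unset Strict Implicit.
Unset Printing Implicit Defensive.
Import GRing.Theory.
Local Open Scope ring_scope.

Lemma ltn_choice (T : Type) (P : nat -> T -> Prop) (x0 : T) n :
  (forall i, (i < n)%N -> exists x, P i x) ->
  exists X : nat -> T, forall i, (i < n)%N -> P i (X i).
Proof.
elim: n => [|n IH] HP; first by exists (fun _ => x0).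
have [X HX] := IH (fun i lt_in => HP i (ltnW lt_in)).
have [x Px] := HP n (ltnSn n).
exists (fun i => if i == n then x else X i) => i.
by rewrite ltnS leq_eqVlt; case: eqP => [->|_] //= /HX.
Qed.

Definition linear_of (K : pzRingType) (U V : lmodType K) (f : U -> V)
  (f_linear : linear f) : {linear U -> V} :=
  HB.pack f (GRing.isLinear.Build K U V *:%R f f_linear).

Section SpanModulo.

Variables (K : pzRingType) (M : lmodType K).
Implicit Types (N S : M -> Prop) (t : seq M).

Definition in_Kspan_mod N t (x : M) : Prop :=
  exists n y, N n /\ in_Kspan t y /\ x = n + y.

Lemma in_KspanP t y :
  in_Kspan t y <-> exists c : nat -> K, y = \sum_(i < size t) c i *: t`_i.
Proof.
split=> [[c ->]|[c ->]]; first by exists (nth 0 c).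
by exists (mkseq c (size t)); apply: eq_bigr => i _; rewrite nth_mkseq.
Qed.

Lemma in_Kspan0 t : in_Kspan t 0.
Proof. by apply/in_KspanP; exists (fun _ => 0); rewrite big1 // => i _; rewrite scale0r. Qed.

Lemma in_KspanD t y z : in_Kspan t y -> in_Kspan t z -> in_Kspan t (y + z).
Proof.
move=> /in_KspanP[c ->] /in_KspanP[d ->]; apply/in_KspanP; exists (fun i => c i + d i).
by rewrite -big_split; apply: eq_bigr => i _; rewrite scalerDl.
Qed.

Lemma in_KspanZ t k y : in_Kspan t y -> in_Kspan t (k *: y).
Proof.
move=> /in_KspanP[c ->]; apply/in_KspanP; exists (fun i => k * c i).
by rewrite scaler_sumr; apply: eq_bigr => i _; rewrite scalerA.
Qed.

Lemma in_Kspan_cat t1 t2 y z :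
  in_Kspan t1 y -> in_Kspan t2 z -> in_Kspan (t1 ++ t2) (y + z).
Proof.
move=> /in_KspanP[c ->] /in_KspanP[d ->]; apply/in_KspanP.
exists (fun i => if (i < size t1)%N then c i else d (i - size t1)%N).
rewrite size_cat big_split_ord; congr (_ + _); apply: eq_bigr => i _ /=.
  by rewrite ltn_ord nth_cat ltn_ord.
by rewrite nth_cat ltnNge leq_addr /= addKn.
Qed.

Lemma is_Ksubmodule_sum S n (F : 'I_n -> M) :
  is_Ksubmodule S -> (forall i, S (F i)) -> S (\sum_(i < n) F i).
Proof. by case=> S0 SD _ SF; apply: (big_ind S). Qed.

Lemma is_KsubmoduleN S x : is_Ksubmodule S -> S x -> S (- x).
Proof. by case=> _ _ SZ Sx; rewrite -scaleN1r; apply: SZ. Qed.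

Lemma is_Ksubmodule_span_mod N t : is_Ksubmodule N -> is_Ksubmodule (in_Kspan_mod N t).
Proof.
case=> N0 ND NZ; split.
- by exists 0, 0; rewrite addr0; split; last split; [|apply: in_Kspan0|].
- move=> _ _ [n1 [y1 [Nn1 [t_y1 ->]]]] [n2 [y2 [Nn2 [t_y2 ->]]]].
  exists (n1 + n2), (y1 + y2); rewrite addrACA.
  by split; last split; [apply: ND | apply: in_KspanD|].
- move=> k _ [n [y [Nn [t_y ->]]]]; exists (k *: n), (k *: y); rewrite scalerDr.
  by split; last split; [apply: NZ | apply: in_KspanZ|].
Qed.

Lemma in_Kspan_mod_sub N t x : N x -> in_Kspan_mod N t x.
Proof. by move=> Nx; exists x, 0; rewrite addr0; split; last split; [|apply: in_Kspan0|]. Qed.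

Lemma in_Kspan_mod_nil N x : in_Kspan_mod N [::] x -> N x.
Proof. by case=> n [_ [Nn [[c ->] ->]]]; rewrite big_ord0 addr0. Qed.

Lemma in_Kspan_mod_cons N u t x :
  in_Kspan_mod N (u :: t) x -> exists c, in_Kspan_mod N t (x - c *: u).
Proof.
case=> n [_ [Nn [/in_KspanP[c ->] ->]]]; exists (c 0%N).
exists n, (\sum_(i < size t) c i.+1 *: t`_i); split=> //; split.
  by apply/in_KspanP; exists (fun i => c i.+1).
by rewrite big_ord_recl /= -/(size t) addrCA (addrC (c 0%N *: u)) addrK.
Qed.

Lemma fg_quotient_refl S : fg_quotient S S.
Proof. by exists [::]; split=> // x Sx; apply: in_Kspan_mod_sub. Qed.

Lemma fg_quotient_subr S N1 N2 :
  (forall x, N1 x -> N2 x) -> fg_quotient S N1 -> fg_quotient S N2.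
Proof.
move=> N12 [s [Ss HS]]; exists s; split=> // x /HS[n [y [N1n ?]]].
by exists n, y; split=> //; apply: N12.
Qed.

Lemma fg_quotient_trans S N1 N2 :
  (forall x, N1 x -> S x) -> fg_quotient S N1 -> fg_quotient N1 N2 -> fg_quotient S N2.
Proof.
move=> N1S [s1 [Ss1 HS1]] [s2 [Ss2 HS2]]; exists (s1 ++ s2); split.
  move=> i; rewrite size_cat nth_cat; case: ifP => [lt_i _|ge_i lt_i]; first exact: Ss1.
  by apply/N1S/Ss2; rewrite -(ltn_add2l (size s1)) subnKC // leqNgt ge_i.
move=> x /HS1[n1 [y1 [/HS2[n2 [y2 [N2n2 [s2_y2 ->]]]] [s1_y1 ->]]]].
exists n2, (y1 + y2); split=> //; split; first exact: in_Kspan_cat.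
by rewrite addrAC addrA.
Qed.

End SpanModulo.

Section Preimages.

Variables (K : pzRingType) (M1 M2 : lmodType K).

Lemma is_Ksubmodule_preimage (f : {linear M1 -> M2}) S N :
  is_Ksubmodule S -> is_Ksubmodule N -> is_Ksubmodule (fun x => S x /\ N (f x)).
Proof.
case=> S0 SD SZ [N0 ND NZ]; split.
- by rewrite linear0.
- by move=> x y [Sx Nx] [Sy Ny]; rewrite linearD; split; [apply: SD | apply: ND].
- by move=> k x [Sx Nx]; rewrite linearZ; split; [apply: SZ | apply: NZ].
Qed.

Lemma in_Kspan_mod_linear (f : {linear M1 -> M2}) N N' t y :
  is_Ksubmodule N' -> (forall n, N n -> N' (f n)) -> (forall v, v \in t -> N' (f v)) ->
  in_Kspan_mod N t y -> N' (f y).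
Proof.
move=> N'sub fN ft [n [_ [Nn [[c ->] ->]]]]; have [_ N'D N'Z] := N'sub.
rewrite linearD linear_sum; apply: N'D; first exact: fN.
by apply: is_Ksubmodule_sum => // i; rewrite linearZ; apply/N'Z/ft/mem_nth.
Qed.

End Preimages.

Section Noetherian.

Variable K : comPzRingType.
Hypothesis K_noetherian : noetherian_ring K.

Lemma noetherian_ideal_gens (J : K -> Prop) : is_ideal_comm J ->
  exists g : seq K, (forall i, (i < size g)%N -> J g`_i) /\
    forall c, J c -> exists d : seq K, c = \sum_(i < size g) d`_i * g`_i.
Proof.
move=> J_ideal; have [g gen] := K_noetherian J_ideal.
exists g; split=> [i lt_i|c /gen //]; apply/gen.
exists (mkseq (fun j => (j == i)%:R) (size g)).
rewrite (eq_bigr (fun j : 'I_(size g) => if (j == i :> nat) then g`_j else 0)) => [|j _].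
  by rewrite -big_mkcond big_ord1_eq lt_i.
by rewrite nth_mkseq // mulr_natl mulrb.
Qed.

Variables M1 M2 : lmodType K.
Implicit Types (f : {linear M1 -> M2}) (S : M1 -> Prop) (N : M2 -> Prop).

(* The coefficients c with f x = c u mod N, x in S, form an ideal of K; lifting a finite
   generating set of it to S gives generators of S modulo {x in S | f x in N}. *)
Lemma fg_quotient_preimage_line f N S (u : M2) :
  is_Ksubmodule N -> is_Ksubmodule S -> (forall x, S x -> exists c, N (f x - c *: u)) ->
  fg_quotient S (fun x => S x /\ N (f x)).
Proof.
move=> Nsub Ssub HS; have [N0 ND NZ] := Nsub; have [S0 SD SZ] := Ssub.
pose J c := exists x, S x /\ N (f x - c *: u).
have J_ideal : is_ideal_comm J.
  split.
  - by exists 0; rewrite linear0 scale0r subr0.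
  - move=> c1 c2 [x1 [Sx1 N1]] [x2 [Sx2 N2]]; exists (x1 + x2); split; first exact: SD.
    by rewrite linearD scalerDl opprD addrACA; apply: ND.
  - move=> k c [x [Sx Nx]]; exists (k *: x); split; first exact: SZ.
    by rewrite linearZ -scalerA -scalerBr; apply: NZ.
have [g [Jg gen]] := noetherian_ideal_gens J_ideal.
have [X HX] := ltn_choice 0 Jg.
exists (mkseq X (size g)); split.
  by move=> i; rewrite size_mkseq => lt_i; rewrite nth_mkseq //; case: (HX i lt_i).
move=> x Sx; have [c Nc] := HS x Sx.
have [d def_c] := gen c (ex_intro _ x (conj Sx Nc)).
pose z := \sum_(i < size g) d`_i *: X i.
have Sz : S z by apply: is_Ksubmodule_sum => // i; apply: SZ; case: (HX i (ltn_ord i)).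
have Nfxz : N (f (x - z)).
  have -> : f (x - z) = (f x - c *: u) - \sum_(i < size g) d`_i *: (f (X i) - g`_i *: u).
    rewrite linearB linear_sum def_c scaler_suml -addrA -opprD -big_split /=.
    by congr (_ - _); apply: eq_bigr => i _; rewrite linearZ addrC scalerBr scalerA subrK.
  apply: ND => //; apply: is_KsubmoduleN => //.
  by apply: is_Ksubmodule_sum => // i; apply: NZ; case: (HX i (ltn_ord i)).
exists (x - z), z; split; first by split; [apply: SD => //; apply: is_KsubmoduleN|].
split; last by rewrite subrK.
by apply/in_KspanP; exists (nth 0 d); rewrite size_mkseq; apply: eq_bigr => i _; rewrite nth_mkseq.
Qed.

Lemma fg_quotient_preimage f N t S :
  is_Ksubmodule N -> is_Ksubmodule S -> (forall x, S x -> in_Kspan_mod N t (f x)) ->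
  fg_quotient S (fun x => S x /\ N (f x)).
Proof.
move=> Nsub; elim: t S => [|u t IH] S Ssub HS.
  apply: fg_quotient_subr (fg_quotient_refl S) => x Sx.
  by split=> //; apply: in_Kspan_mod_nil; apply: HS.
have N'sub := is_Ksubmodule_span_mod t Nsub.
have S_S1 := fg_quotient_preimage_line N'sub Ssub (fun x Sx => in_Kspan_mod_cons (HS x Sx)).
have S1_S2 := IH _ (is_Ksubmodule_preimage f Ssub N'sub) (fun x S1x => S1x.2).
apply: fg_quotient_subr (fg_quotient_trans (fun x (S1x : S x /\ _) => S1x.1) S_S1 S1_S2).
by move=> x [[]].
Qed.

Lemma fg_quotient_preimages (I : eqType) (F : I -> {linear M1 -> M2}) N t S (ps : seq I) :
  is_Ksubmodule N -> is_Ksubmodule S -> (forall p x, S x -> in_Kspan_mod N t (F p x)) ->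
  fg_quotient S (fun x => S x /\ forall p, p \in ps -> N (F p x)).
Proof.
move=> Nsub; elim: ps S => [|p ps IH] S Ssub HS.
  by apply: fg_quotient_subr (fg_quotient_refl S) => x Sx; split.
have S1sub := is_Ksubmodule_preimage (F p) Ssub Nsub.
have S_S1 := fg_quotient_preimage Nsub Ssub (HS p).
have S1_S2 := IH _ S1sub (fun q x S1x => HS q x S1x.1).
apply: fg_quotient_subr (fg_quotient_trans (fun x (S1x : S x /\ _) => S1x.1) S_S1 S1_S2).
by move=> x [[Sx Nx] Nxs]; split=> // q; rewrite inE => /predU1P[->|/Nxs].
Qed.

End Noetherian.

Section IdealCore.

Variables (K : comPzRingType) (A : lmodType K) (mul : A -> A -> A).

Definition sandwich (a b : option A) (x : A) : A :=
  let xb := if b is Some b then mul x b else x in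
  if a is Some a then mul a xb else xb.

(* The largest two-sided ideal of A contained in B; the optional factors account for A
   having no unit. *)
Definition ideal_core (B : A -> Prop) (x : A) : Prop := forall a b, B (sandwich a b x).

Hypothesis mul_alg : is_Kalgebra mul.

Let mulA : associative mul. Proof. by case: mul_alg. Qed.
Let mulDr a x y : mul a (x + y) = mul a x + mul a y. Proof. by case: mul_alg. Qed.
Let mulDl a x y : mul (x + y) a = mul x a + mul y a. Proof. by case: mul_alg. Qed.
Let mulZl k x y : mul (k *: x) y = k *: mul x y. Proof. by case: mul_alg. Qed.
Let mulZr k x y : mul x (k *: y) = k *: mul x y. Proof. by case: mul_alg. Qed.

Lemma linear_sandwich a b : linear (sandwich a b).
Proof. by case: a b => [a|] [b|] k x y /=; rewrite ?mulDl ?mulDr ?mulZl ?mulZr. Qed.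

HB.instance Definition _ a b :=
  GRing.isLinear.Build K A A *:%R (sandwich a b) (linear_sandwich a b).

Lemma linear_sandwich_l b x : linear (fun a => sandwich (Some a) b x).
Proof. by move=> k a1 a2 /=; rewrite mulDl mulZl. Qed.

Lemma linear_sandwich_r a x : linear (fun b => sandwich a (Some b) x).
Proof. by case: a => [a|] k b1 b2 /=; rewrite ?mulDr ?mulZr. Qed.

Lemma sandwichMl a b c x :
  sandwich a b (mul c x) = sandwich (Some (if a is Some a then mul a c else c)) b x.
Proof. by case: a b => [a|] [b|] /=; rewrite ?mulA. Qed.

Lemma sandwichMr a b c x :
  sandwich a b (mul x c) = sandwich a (Some (if b is Some b then mul c b else c)) x.
Proof. by case: a b => [a|] [b|] /=; rewrite ?mulA. Qed.

Variable B : A -> Prop.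

Lemma is_Kideal_core : is_Ksubmodule B -> is_Kideal mul (ideal_core B).
Proof.
case=> B0 BD BZ; split.
- split=> [a b|x y Ix Iy a b|k x Ix a b].
  + by rewrite linear0.
  + by rewrite linearD; apply: BD; [apply: Ix | apply: Iy].
  + by rewrite linearZ; apply/BZ/Ix.
- by move=> c x Ix a b; rewrite sandwichMl.
- by move=> c x Ix a b; rewrite sandwichMr.
Qed.

Lemma ideal_core_span t x :
  is_Ksubalgebra mul B -> (forall y, in_Kspan_mod B t y) ->
  (forall a b, a \in None :: map Some t -> b \in None :: map Some t -> B (sandwich a b x)) ->
  ideal_core B x.
Proof.
move=> [Bsub BM] AB Hx; set ts := None :: map Some t in Hx.
have tsN : None \in ts := mem_head _ _.
have tsS v : v \in t -> Some v \in ts by move=> vt; rewrite in_cons (mem_map Some_inj) vt orbT.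
have B_right a b : a \in ts -> B (sandwich a (Some b) x).
  move=> ts_a; apply: (in_Kspan_mod_linear (f := linear_of (linear_sandwich_r a x)) Bsub _ _ (AB b)).
    by move=> n Bn; case: a ts_a => [a|] ts_a /=; rewrite ?mulA; apply: BM (Hx _ None ts_a tsN) Bn.
  by move=> v /tsS; apply: Hx.
have B_middle b : B (sandwich None b x).
  by case: b => [b|]; [apply: B_right | exact: (Hx None None tsN tsN)].
have B_left a b : B (sandwich (Some a) b x).
  apply: (in_Kspan_mod_linear (f := linear_of (linear_sandwich_l b x)) Bsub _ _ (AB a)).
    by move=> n Bn; apply: BM Bn (B_middle b).
  move=> v /tsS ts_v; case: b => [b|]; first exact: B_right.
  exact: (Hx (Some v) None ts_v tsN).
by case=> [a|]; [apply: B_left | apply: B_middle].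
Qed.

Lemma fg_quotient_ideal_core :
  noetherian_ring K -> is_Ksubalgebra mul B -> fg_quotient (fun _ => True) B ->
  fg_quotient B (ideal_core B).
Proof.
move=> K_noetherian B_alg [t [_ AB]]; set ts := None :: map Some t.
have := fg_quotient_preimages K_noetherian (F := fun p => sandwich p.1 p.2)
  [seq (a, b) | a <- ts, b <- ts] B_alg.1 B_alg.1 (fun p x _ => AB _ I).
apply: fg_quotient_subr => x [_ Hx].
apply: ideal_core_span B_alg (fun y => AB y I) _ => a b ts_a ts_b.
exact: (Hx (a, b) (allpairs_f pair ts_a ts_b)).
Qed.

End IdealCore.

Theorem lemma2p1 (K : comPzRingType) (A : lmodType K) (mul : A -> A -> A)
  (B : A -> Prop) :
  noetherian_ring K ->
  is_Kalgebra mul ->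
  is_Ksubalgebra mul B ->
  fg_quotient (fun _ => True) B ->
  exists I : A -> Prop,
    [/\ is_Kideal mul I, (forall x, I x -> B x), fg_quotient B I
      & fg_quotient (fun _ => True) I].
Proof.
move=> K_noetherian mul_alg B_alg A_B.
have B_core := fg_quotient_ideal_core mul_alg K_noetherian B_alg A_B.
exists (ideal_core mul B); split=> //.
- exact: is_Kideal_core B_alg.1.
- by move=> x /(_ None None).
- exact: fg_quotient_trans A_B B_core.
Qed.
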